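(* Let $D$ be a connected locally finite C-homogeneous digraph. Then for every vertex $x\in VD$, neither the subdigraph induced by $N^+(x)$ nor the subdigraph induced by $N^-(x)$ is isomorphic to $H$.
   Context: A digraph has an irreflexive, antisymmetric edge relation; connectedness and local finiteness refer to the underlying undirected graph. $D$ is C-homogeneous if every isomorphism between finite connected induced subdigraphs extends to an automorphism of $D$. $N^+(x)=\{y: xy\in ED\}$, $N^-(x)=\{y: yx\in ED\}$. A digraph is homogeneous if every isomorphism between finite induced subdigraphs extends to an automorphism. By Lachlan's classification, a finite digraph is homogeneous iff it is isomorphic to the directed 4-cycle $C_4$, to $\bar K_n$ (no edges, $n$ vertices), $\bar K_n[C_3]$, $C_3[\bar K_n]$ ($n\ge 1$, lexicographic products with the directed triangle $C_3$), or to one further exceptional digraph; $H$ denotes this exceptional finite homogeneous digraph. *)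

From Stdlib Require Import List Relations.
Import ListNotations.

Definition is_digraph {V : Type} (E : V -> V -> Prop) : Prop :=
  (forall x, ~ E x x) /\ (forall x y, E x y -> ~ E y x).

Definition adj {V : Type} (E : V -> V -> Prop) (x y : V) : Prop := E x y \/ E y x.

Definition connected_on {V : Type} (E : V -> V -> Prop) (A : V -> Prop) : Prop :=
  forall x y, A x -> A y ->
    clos_refl_trans V (fun a b => A a /\ A b /\ adj E a b) x y.

Definition connected {V : Type} (E : V -> V -> Prop) : Prop :=
  connected_on E (fun _ => True).

Definition locally_finite {V : Type} (E : V -> V -> Prop) : Prop :=
  forall x, exists l : list V, forall y, adj E x y -> In y l.

Definition finite_set {V : Type} (A : V -> Prop) : Prop :=
  exists l : list V, forall x, A x -> In x l.

Definition induced_iso {V : Type} (E : V -> V -> Prop) (A B : V -> Prop) (f : V -> V) : Prop :=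
  (forall x, A x -> B (f x)) /\
  (forall x y, A x -> A y -> f x = f y -> x = y) /\
  (forall y, B y -> exists x, A x /\ f x = y) /\
  (forall x y, A x -> A y -> (E x y <-> E (f x) (f y))).

Definition automorphism {V : Type} (E : V -> V -> Prop) (g : V -> V) : Prop :=
  (exists h : V -> V, (forall x, h (g x) = x) /\ (forall y, g (h y) = y)) /\
  (forall x y, E x y <-> E (g x) (g y)).

Definition C_homogeneous {V : Type} (E : V -> V -> Prop) : Prop :=
  forall (A B : V -> Prop) (f : V -> V),
    finite_set A -> connected_on E A ->
    finite_set B -> connected_on E B ->
    induced_iso E A B f ->
    exists g, automorphism E g /\ (forall x, A x -> g x = f x).

Definition out_nbhd {V : Type} (E : V -> V -> Prop) (x : V) : V -> Prop := fun y => E x y.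
Definition in_nbhd {V : Type} (E : V -> V -> Prop) (x : V) : V -> Prop := fun y => E y x.

Definition induced_isomorphic {V T : Type} (E : V -> V -> Prop) (S : V -> Prop)
  (e : T -> T -> Prop) : Prop :=
  exists phi : T -> V,
    (forall a b, phi a = phi b -> a = b) /\
    (forall v, S v <-> exists t, phi t = v) /\
    (forall a b, e a b <-> E (phi a) (phi b)).

(* ---- Lachlan's exceptional finite homogeneous digraph H ----
   H is the 8-vertex digraph  \hat{C_3}  (Cherlin's notation): vertices
   top, bot and (i,t) with i : bool, t in Z/3; arcs
     top -> (false,t) -> bot -> (true,t) -> top,
     (i,t) -> (i,s)      iff  t -> s in C_3,
     (i,t) -> (~~i,s)    iff  s -> t in C_3. *)
Inductive Z3 : Type := z0 | z1 | z2.

Definition C3_arc (a b : Z3) : Prop :=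
  match a, b with
  | z0, z1 | z1, z2 | z2, z0 => True
  | _, _ => False
  end.

Inductive HV : Type :=
| Htop : HV
| Hbot : HV
| Hpt : bool -> Z3 -> HV.

Definition H_arc (x y : HV) : Prop :=
  match x, y with
  | Htop, Hpt false _ => True
  | Hpt true _, Htop => True
  | Hbot, Hpt true _ => True
  | Hpt false _, Hbot => True
  | Hpt i t, Hpt j s => if Bool.eqb i j then C3_arc t s else C3_arc s t
  | _, _ => False
  end.

(* Suppose N+(x) induces a copy of H. C-homogeneity makes D vertex-, arc- and
   induced-2-arc-transitive, so every out-neighbourhood is a copy of H and, for every arc uv,
   N+(u) ∩ N+(v) is a directed triangle. Double counting around a vertex shows that every arc
   uv lies in exactly two directed triangles uvy. Inside N+(v) ≅ H the triangle
   N+(u) ∩ N+(v) has a unique dominating vertex w, and w has a unique non-neighbour b; an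
   automorphism fixing u, v and rotating the triangle shows that the two apexes y are w and b.
   Hence b -> u, and the triangle points to b. Applying this to the arcs from x into N+(x)
   gives one vertex b with N+(x) -> b -> x, impossible since x has an out-neighbour inside
   N+(b). Reversing all arcs handles N-(x), as H is isomorphic to its converse. *)

From Stdlib Require Import List Bool Arith Lia Relations Classical ClassicalEpsilon.
Import ListNotations.

Section Cardinality.
Context {T : Type}.

Definition card_is (P : T -> Prop) (n : nat) : Prop :=
  exists l, NoDup l /\ (forall y, In y l <-> P y) /\ length l = n.

Lemma card_is_list (l : list T) : NoDup l -> card_is (fun y => In y l) (length l).
Proof. intro Hl. exists l. split; [exact Hl | split; [tauto | reflexivity]]. Qed.

Lemma card_is_ext (P Q : T -> Prop) n :
  (forall y, P y <-> Q y) -> card_is P n -> card_is Q n.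
Proof.
  intros PQ [l [Hl [HP Hn]]]. exists l.
  split; [exact Hl | split; [intro y; rewrite HP; apply PQ | exact Hn]].
Qed.

Lemma card_is_le (P Q : T -> Prop) n m :
  (forall y, P y -> Q y) -> card_is P n -> card_is Q m -> n <= m.
Proof.
  intros PQ [lp [Np [Ip <-]]] [lq [Nq [Iq <-]]].
  apply NoDup_incl_length; auto. intros y Hy. apply Iq, PQ, Ip, Hy.
Qed.

Lemma card_is_unique (P : T -> Prop) n m : card_is P n -> card_is P m -> n = m.
Proof. intros Hn Hm. apply Nat.le_antisymm; eapply card_is_le; eauto. Qed.

Lemma card_is_lt (P Q : T -> Prop) n m a :
  (forall y, P y -> Q y) -> Q a -> ~ P a -> card_is P n -> card_is Q m -> n < m.
Proof.
  intros PQ Qa nPa [lp [Np [Ip <-]]] [lq [Nq [Iq <-]]].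
  change (length (a :: lp) <= length lq). apply NoDup_incl_length.
  - constructor; auto. rewrite Ip. exact nPa.
  - intros y [<- | Hy]; apply Iq; auto. apply PQ, Ip, Hy.
Qed.

Lemma card_is_pos (P : T -> Prop) n a : P a -> card_is P n -> 0 < n.
Proof. intros Pa [[|b l] [_ [Il <-]]]; simpl; [apply Il in Pa; contradiction | lia]. Qed.

Lemma card_is_exists (P : T -> Prop) (l : list T) :
  (forall y, P y -> In y l) -> exists n, card_is P n.
Proof.
  intro Pl.
  set (decP := fun y => if excluded_middle_informative (P y) then true else false).
  set (eq_dec := fun a b : T => excluded_middle_informative (a = b)).
  exists (length (filter decP (nodup eq_dec l))), (filter decP (nodup eq_dec l)).
  split; [apply NoDup_filter, NoDup_nodup | split; [| reflexivity]].
  intro y. rewrite filter_In, nodup_In. unfold decP.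
  destruct excluded_middle_informative as [Py | nPy].
  - split; [tauto | auto].
  - split; [intros [_ F]; discriminate F | contradiction].
Qed.

Lemma card_is_union (P Q : T -> Prop) n m :
  (forall y, P y -> Q y -> False) -> card_is P n -> card_is Q m ->
  card_is (fun y => P y \/ Q y) (n + m).
Proof.
  intros PQ [lp [Np [Ip <-]]] [lq [Nq [Iq <-]]].
  exists (lp ++ lq). split; [| split].
  - apply NoDup_app; auto. intros y Hp Hq. apply (PQ y); [apply Ip | apply Iq]; auto.
  - intro y. rewrite in_app_iff, Ip, Iq. tauto.
  - apply length_app.
Qed.

Lemma card_is_diff (P Q : T -> Prop) n k :
  card_is P n -> card_is (fun y => P y /\ Q y) k -> card_is (fun y => P y /\ ~ Q y) (n - k).
Proof.
  intros HP HPQ. destruct HP as [l [Nl [Il Hn]]].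
  destruct (card_is_exists (fun y => P y /\ ~ Q y) l) as [m Hm].
  { intros y [Py _]. apply Il, Py. }
  assert (n = k + m) as ->.
  { apply (card_is_unique P).
    - exists l; auto.
    - apply (card_is_ext (fun y => (P y /\ Q y) \/ (P y /\ ~ Q y))).
      + intro y. destruct (classic (Q y)); tauto.
      + apply card_is_union; auto. tauto. }
  replace (k + m - k) with m by lia. exact Hm.
Qed.

End Cardinality.

Lemma card_is_image {A B} (f : A -> B) (P : A -> Prop) (Q : B -> Prop) n :
  (forall a b, f a = f b -> a = b) -> (forall y, Q y <-> exists x, P x /\ f x = y) ->
  card_is P n -> card_is Q n.
Proof.
  intros Hf HQ [l [Nl [Il <-]]]. exists (map f l). split; [| split].
  - apply NoDup_map_NoDup_ForallPairs; auto. intros a b _ _. apply Hf.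
  - intro y. rewrite HQ, in_map_iff. firstorder.
  - apply length_map.
Qed.

Lemma card_is_pairs {A B} (PA : A -> Prop) (S : A -> B -> Prop) n p :
  card_is PA n -> (forall a, PA a -> card_is (S a) p) ->
  card_is (fun ab => PA (fst ab) /\ S (fst ab) (snd ab)) (n * p).
Proof.
  intros [la [Nla [Ila <-]]] HS.
  apply (card_is_ext (fun ab => In (fst ab) la /\ S (fst ab) (snd ab))).
  { intro ab. rewrite Ila. tauto. }
  assert (HS' : forall a, In a la -> card_is (S a) p) by (intros a Ha; apply HS, Ila, Ha).
  clear Ila HS. induction la as [|a la IH]; simpl.
  - exists []. split; [constructor | split; [simpl; tauto | reflexivity]].
  - inversion Nla as [|? ? Nin Nla']; subst.
    apply (card_is_ext (fun ab => (fst ab = a /\ S a (snd ab)) \/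
                                  (In (fst ab) la /\ S (fst ab) (snd ab)))).
    + intros [a' b]; simpl. split; [intros [[-> Hb] | H]; tauto |].
      intros [[<- | Ha'] Hb]; tauto.
    + apply card_is_union.
      * intros [a' b] [-> _] [Ha' _]. contradiction.
      * apply (card_is_image (pair a) (S a)).
        -- intros b b' E. injection E. auto.
        -- intros [a' b]; simpl. split; [intros [-> Hb]; eauto |].
           intros [b' [Hb E]]. injection E. intros; subst; auto.
        -- apply HS'. left. reflexivity.
      * apply IH; [exact Nla' | intros a' Ha'; apply HS'; right; exact Ha'].
Qed.

Lemma double_counting {A B} (PA : A -> Prop) (PB : B -> Prop) (R : A -> B -> Prop) n m p q :
  card_is PA n -> card_is PB m ->
  (forall a, PA a -> card_is (fun b => PB b /\ R a b) p) ->
  (forall b, PB b -> card_is (fun a => PA a /\ R a b) q) ->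
  n * p = m * q.
Proof.
  intros HA HB Hp Hq.
  apply (card_is_unique (fun ab => PA (fst ab) /\ PB (snd ab) /\ R (fst ab) (snd ab))).
  - apply (card_is_ext (fun ab => PA (fst ab) /\ (PB (snd ab) /\ R (fst ab) (snd ab)))).
    + tauto.
    + apply (card_is_pairs PA (fun a b => PB b /\ R a b)); auto.
  - apply (card_is_image (fun ba : B * A => (snd ba, fst ba))
             (fun ba => PB (fst ba) /\ (PA (snd ba) /\ R (snd ba) (fst ba)))).
    + intros [b a] [b' a'] E. injection E. intros; subst; auto.
    + intros [a b]. split; [intros H; exists (b, a); simpl; tauto |].
      intros [[b' a'] [H E]]. injection E. intros; subst. simpl in *. tauto.
    + apply (card_is_pairs PB (fun b a => PA a /\ R a b)); auto.
Qed.

Definition Z3_next (i : Z3) : Z3 := match i with z0 => z1 | z1 => z2 | z2 => z0 end.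

(* [N+(q)] in H, listed as the directed triangle [H_out q z0 -> H_out q z1 -> H_out q z2]. *)
Definition H_out (q : HV) (i : Z3) : HV :=
  match q, i with
  | Htop, _ => Hpt false i
  | Hbot, _ => Hpt true i
  | Hpt b s, z0 => Hpt b (Z3_next s)
  | Hpt b s, z1 => if b then Htop else Hbot
  | Hpt b s, z2 => Hpt (negb b) (Z3_next (Z3_next s))
  end.

(* The unique vertex of H not adjacent to [q]. *)
Definition H_antipode (q : HV) : HV :=
  match q with Htop => Hbot | Hbot => Htop | Hpt b s => Hpt (negb b) s end.

Ltac H_cases := repeat match goal with
  | q : HV |- _ => destruct q as [| |[] []]
  | i : Z3 |- _ => destruct i
  end; simpl in *.

Ltac H_witness tac :=
  first [ exists Htop; tac | exists Hbot; tac
        | exists (Hpt false z0); tac | exists (Hpt false z1); tac | exists (Hpt false z2); tac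
        | exists (Hpt true z0); tac | exists (Hpt true z1); tac | exists (Hpt true z2); tac ].

Lemma H_arc_out_next q i : H_arc (H_out q i) (H_out q (Z3_next i)).
Proof. H_cases; exact I. Qed.

Lemma H_arc_out q y : H_arc q y <-> exists i, y = H_out q i.
Proof.
  split.
  - intro Hy. H_cases; try contradiction;
      first [exists z0; reflexivity | exists z1; reflexivity | exists z2; reflexivity].
  - intros [i ->]. H_cases; exact I.
Qed.

Lemma H_out_inj q i j : H_out q i = H_out q j -> i = j.
Proof. H_cases; congruence. Qed.

Lemma H_triangle_top c0 c1 c2 :
  H_arc c0 c1 -> H_arc c1 c2 -> H_arc c2 c0 ->
  exists q, forall y, H_arc q y <-> y = c0 \/ y = c1 \/ y = c2.
Proof.
  intros A01 A12 A20. H_cases; try contradiction;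
    H_witness ltac:(intro y; destruct y as [| |[] []]; simpl; solve [intuition congruence]).
Qed.

Lemma H_top_unique y q : (forall i, H_arc y (H_out q i)) -> y = q.
Proof.
  intro Hy. pose proof (Hy z0). pose proof (Hy z1). pose proof (Hy z2). clear Hy.
  H_cases; solve [reflexivity | contradiction].
Qed.

Lemma H_out_to_antipode q i : H_arc (H_out q i) (H_antipode q).
Proof. H_cases; exact I. Qed.

Lemma H_vertex_cases q y : y = q \/ H_arc q y \/ y = H_antipode q \/ H_arc y q.
Proof.
  H_cases; first [ left; reflexivity | right; left; exact I
                 | right; right; left; reflexivity | right; right; right; exact I ].
Qed.

Lemma H_in_neighbour_out y q : H_arc y q -> exists i, H_arc y (H_out q i).
Proof.
  intro Hy. H_cases; try contradiction;
    first [exists z0; exact I | exists z1; exact I | exists z2; exact I].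
Qed.

Lemma H_in_neighbour_out_unique y q i j :
  H_arc y q -> H_arc y (H_out q i) -> H_arc y (H_out q j) -> i = j.
Proof. H_cases; solve [reflexivity | contradiction]. Qed.

Lemma H_arc_dec (a b : HV) : {H_arc a b} + {~ H_arc a b}.
Proof. H_cases; auto. Defined.

Definition H_arcb (a b : HV) : bool := if H_arc_dec a b then true else false.

Lemma H_arcb_true a b : H_arcb a b = true <-> H_arc a b.
Proof. unfold H_arcb. destruct H_arc_dec; intuition discriminate. Qed.

Lemma H_arcb_false a b : H_arcb a b = false <-> ~ H_arc a b.
Proof. unfold H_arcb. destruct H_arc_dec; intuition discriminate. Qed.

Definition H_vertices : list HV :=
  [Htop; Hbot; Hpt false z0; Hpt false z1; Hpt false z2; Hpt true z0; Hpt true z1; Hpt true z2].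

Lemma H_vertices_complete a : In a H_vertices.
Proof. H_cases; tauto. Qed.

Lemma H_vertices_NoDup : NoDup H_vertices.
Proof. repeat constructor; simpl; intuition discriminate. Qed.

Lemma NoDup_list_prod {A B} (l1 : list A) (l2 : list B) :
  NoDup l1 -> NoDup l2 -> NoDup (list_prod l1 l2).
Proof.
  intros N1 N2. induction N1 as [|a l1 Na N1 IH]; simpl; [constructor |].
  apply NoDup_app; auto.
  - apply NoDup_map_NoDup_ForallPairs; auto. intros b b' _ _ E. injection E. auto.
  - intros [a' b] Hab Hl. apply in_map_iff in Hab. destruct Hab as [b' [E _]].
    injection E. intros _ <-. apply in_prod_iff in Hl. tauto.
Qed.

Definition H_induced_two_arc (p : HV) (ac : HV * HV) : Prop :=
  H_arc (fst ac) p /\ H_arc p (snd ac) /\ ~ adj H_arc (fst ac) (snd ac).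

Lemma H_induced_two_arc_card p : card_is (H_induced_two_arc p) 3.
Proof.
  set (two_arcb := fun ac : HV * HV => H_arcb (fst ac) p && H_arcb p (snd ac)
                     && negb (H_arcb (fst ac) (snd ac) || H_arcb (snd ac) (fst ac))).
  exists (filter two_arcb (list_prod H_vertices H_vertices)). split; [| split].
  - apply NoDup_filter, NoDup_list_prod; apply H_vertices_NoDup.
  - intros [a c]. rewrite filter_In, in_prod_iff. unfold two_arcb, H_induced_two_arc, adj. simpl.
    rewrite !andb_true_iff, negb_true_iff, orb_false_iff, !H_arcb_true, !H_arcb_false.
    pose proof (H_vertices_complete a). pose proof (H_vertices_complete c). tauto.
  - destruct p as [| |[] []]; vm_compute; reflexivity.
Qed.

Definition H_rev (a : HV) : HV :=
  match a with
  | Htop => Hbot | Hbot => Htop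
  | Hpt b z0 => Hpt b z0 | Hpt b z1 => Hpt b z2 | Hpt b z2 => Hpt b z1
  end.

Lemma H_rev_involutive a : H_rev (H_rev a) = a.
Proof. H_cases; reflexivity. Qed.

Lemma H_arc_rev a b : H_arc a b <-> H_arc (H_rev b) (H_rev a).
Proof. H_cases; tauto. Qed.

Lemma H_out_card q : card_is (H_arc q) 3.
Proof.
  apply (card_is_image (H_out q) (fun i => In i [z0; z1; z2])).
  - apply H_out_inj.
  - intro y. rewrite H_arc_out. split.
    + intros [i ->]. exists i. destruct i; simpl; tauto.
    + intros [i [_ <-]]. eauto.
  - apply card_is_list. repeat constructor; simpl; intuition discriminate.
Qed.

Lemma H_covered_by_false_out a : a = Htop \/ exists s, H_arc (Hpt false s) a.
Proof.
  H_cases; first [ left; reflexivity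
                 | right; first [exists z0; exact I | exists z1; exact I | exists z2; exact I] ].
Qed.

Section Automorphisms.
Context {V : Type} (E : V -> V -> Prop).

Lemma aut_arc g a b : automorphism E g -> (E a b <-> E (g a) (g b)).
Proof. intros [_ Hg]. apply Hg. Qed.

Lemma aut_arc_map g a b : automorphism E g -> E a b -> E (g a) (g b).
Proof. intro Hg. apply aut_arc, Hg. Qed.

Lemma aut_inj g a b : automorphism E g -> g a = g b -> a = b.
Proof. intros [[h [hg _]] _] E'. rewrite <- (hg a), <- (hg b), E'. reflexivity. Qed.

Lemma card_is_aut g (P Q : V -> Prop) n :
  automorphism E g -> (forall y, Q (g y) <-> P y) -> card_is P n -> card_is Q n.
Proof.
  intros Hg PQ. apply card_is_image with g.
  - intros a b. apply (aut_inj g); auto.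
  - intro y. destruct Hg as [[h [_ gh]] _]. split.
    + intro Qy. exists (h y). rewrite <- PQ, gh. auto.
    + intros [z [Pz <-]]. apply PQ, Pz.
Qed.

Definition out_iso {T} (e : T -> T -> Prop) (v : V) (psi : T -> V) : Prop :=
  (forall a b, psi a = psi b -> a = b) /\ (forall y, E v y <-> exists t, psi t = y) /\
  (forall a b, e a b <-> E (psi a) (psi b)).

Lemma out_iso_inj {T} (e : T -> T -> Prop) v psi a b :
  out_iso e v psi -> psi a = psi b -> a = b.
Proof. intros [Hinj _]. apply Hinj. Qed.

Lemma out_iso_in {T} (e : T -> T -> Prop) v psi a : out_iso e v psi -> E v (psi a).
Proof. intros [_ [Hout _]]. apply Hout. eauto. Qed.

Lemma out_iso_out {T} (e : T -> T -> Prop) v psi y :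
  out_iso e v psi -> E v y -> exists a, psi a = y.
Proof. intros [_ [Hout _]]. apply Hout. Qed.

Lemma out_iso_arc {T} (e : T -> T -> Prop) v psi a b :
  out_iso e v psi -> (e a b <-> E (psi a) (psi b)).
Proof. intros [_ [_ Harc]]. apply Harc. Qed.

Lemma out_iso_aut {T} (e : T -> T -> Prop) v psi g :
  automorphism E g -> out_iso e v psi -> out_iso e (g v) (fun t => g (psi t)).
Proof.
  intros Hg [Hinj [Hout Harc]]. split; [| split].
  - intros a b Hab. apply Hinj, (aut_inj g); auto.
  - intro y. destruct Hg as [[h [hg gh]] Hg]. rewrite <- (gh y), <- Hg, Hout.
    split; intros [t Ht]; exists t; [rewrite Ht; auto |].
    rewrite <- (hg (psi t)), Ht, hg. reflexivity.
  - intros a b. rewrite Harc. apply aut_arc, Hg.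
Qed.

Lemma connected_on_star (A : V -> Prop) c :
  A c -> (forall y, A y -> y = c \/ adj E c y) -> connected_on E A.
Proof.
  intros Ac Hc x y Ax Ay. apply rt_trans with c.
  - destruct (Hc x Ax) as [-> | Hx]; [apply rt_refl | apply rt_step].
    unfold adj in *. tauto.
  - destruct (Hc y Ay) as [-> | Hy]; [apply rt_refl | apply rt_step]. tauto.
Qed.

Fixpoint index_of (v : V) (l : list V) : nat :=
  match l with
  | [] => 0
  | a :: l => if excluded_middle_informative (v = a) then 0 else S (index_of v l)
  end.

Lemma index_of_spec v l d : In v l -> index_of v l < length l /\ nth (index_of v l) l d = v.
Proof.
  induction l as [|a l IH]; simpl; [tauto |]. intro Hv.
  destruct excluded_middle_informative as [-> | ne]; [split; auto; lia |].
  destruct Hv as [-> | Hv]; [contradiction |]. destruct (IH Hv). split; auto; lia.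
Qed.

Lemma index_of_nth l d i : NoDup l -> i < length l -> index_of (nth i l d) l = i.
Proof.
  intros Nl Hi. destruct (index_of_spec (nth i l d) l d) as [Hlt Hnth]; [apply nth_In, Hi |].
  eapply NoDup_nth; eauto.
Qed.

Hypothesis CH : C_homogeneous E.

Lemma extend_star_iso (l1 l2 : list V) d :
  NoDup l1 -> NoDup l2 -> length l1 = length l2 ->
  (forall i j, i < length l1 -> j < length l1 ->
     (E (nth i l1 d) (nth j l1 d) <-> E (nth i l2 d) (nth j l2 d))) ->
  (forall j, 0 < j < length l1 -> adj E (nth 0 l1 d) (nth j l1 d)) ->
  exists g, automorphism E g /\ forall i, i < length l1 -> g (nth i l1 d) = nth i l2 d.
Proof.
  intros N1 N2 L Harc Hstar.
  destruct l1 as [|c l1'] eqn:El1.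
  { exists (fun v => v). split; [split; [exists (fun v => v) | ] |]; simpl; intuition lia. }
  rewrite <- El1 in *. assert (L0 : 0 < length l1) by (subst; simpl; lia).
  set (f := fun v => nth (index_of v l1) l2 d).
  assert (f_nth : forall i, i < length l1 -> f (nth i l1 d) = nth i l2 d).
  { intros i Hi. unfold f. rewrite index_of_nth; auto. }
  assert (star : forall l, length l = length l1 ->
            (forall j, 0 < j < length l1 -> adj E (nth 0 l d) (nth j l d)) ->
            connected_on E (fun v => In v l)).
  { intros l Ll Hl. apply connected_on_star with (nth 0 l d); [apply nth_In; lia |].
    intros y Hy. destruct (In_nth _ _ d Hy) as [[|j] [Hj <-]]; [left; reflexivity |].
    right. apply Hl. lia. }
  destruct (CH (fun v => In v l1) (fun v => In v l2) f) as [g [Hg Hgf]].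
  - exists l1; auto.
  - apply star; auto.
  - exists l2; auto.
  - apply star; [auto |]. intros j Hj.
    destruct (Hstar j Hj); [left | right]; apply Harc; auto; lia.
  - split; [| split; [| split]].
    + intros v Hv. destruct (index_of_spec v l1 d Hv). apply nth_In. lia.
    + intros a b Ha Hb Hab.
      destruct (index_of_spec a l1 d Ha) as [Ia Na], (index_of_spec b l1 d Hb) as [Ib Nb].
      rewrite <- Na, <- Nb. f_equal. eapply NoDup_nth; eauto; lia.
    + intros y Hy. destruct (In_nth _ _ d Hy) as [j [Hj <-]].
      exists (nth j l1 d). split; [apply nth_In; lia | apply f_nth; lia].
    + intros a b Ha Hb.
      destruct (index_of_spec a l1 d Ha) as [Ia Na], (index_of_spec b l1 d Hb) as [Ib Nb].
      rewrite <- Na, <- Nb, !f_nth by lia. apply Harc; lia.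
  - exists g. split; auto. intros i Hi. rewrite Hgf; [apply f_nth, Hi | apply nth_In, Hi].
Qed.

End Automorphisms.

Lemma arc_neq {V} (E : V -> V -> Prop) a b : is_digraph E -> E a b -> a <> b.
Proof. intros [irr _] Hab ->. exact (irr b Hab). Qed.

Ltac arc_iff dig :=
  lazymatch type of dig with
  | is_digraph ?E =>
    split; intro;
    first [ assumption
          | exfalso; match goal with
                     | H : E ?a ?a |- _ => exact (proj1 dig a H)
                     | H1 : E ?a ?b, H2 : E ?b ?a |- _ => exact (proj2 dig a b H1 H2)
                     | H1 : ~ E ?a ?b, H2 : E ?a ?b |- _ => exact (H1 H2)
                     end ]
  end.

Ltac NoDup_by_arcs dig :=
  lazymatch type of dig with
  | is_digraph ?E =>
    repeat match goal with
    | H : E ?a ?b |- _ =>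
      lazymatch goal with
      | _ : a <> b |- _ => fail
      | _ => pose proof (arc_neq E a b dig H)
      end
    end;
    repeat constructor; simpl; intuition congruence
  end.

Section Transitivity.
Context {V : Type} (E : V -> V -> Prop).
Hypothesis dig : is_digraph E.
Hypothesis CH : C_homogeneous E.

Lemma vertex_transitive u v : exists g, automorphism E g /\ g u = v.
Proof.
  destruct (extend_star_iso E CH [u] [v] u) as [g [Hg Hgu]];
    try solve [repeat constructor; simpl; tauto | reflexivity | simpl; lia].
  - intros [|i] [|j] Hi Hj; simpl in *; try lia. arc_iff dig.
  - exists g. split; auto. apply (Hgu 0). simpl; lia.
Qed.

Lemma arc_transitive u v u' v' :
  E u v -> E u' v' -> exists g, automorphism E g /\ g u = u' /\ g v = v'.
Proof.
  intros Huv Huv'. destruct (extend_star_iso E CH [u; v] [u'; v'] u) as [g [Hg Hgu]].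
  - NoDup_by_arcs dig.
  - NoDup_by_arcs dig.
  - reflexivity.
  - intros [|[|i]] [|[|j]] Hi Hj; simpl in *; try lia; arc_iff dig.
  - intros [|[|j]] Hj; simpl in *; [lia | left; exact Huv | lia].
  - exists g. split; auto. split; [apply (Hgu 0) | apply (Hgu 1)]; simpl; lia.
Qed.

Lemma induced_two_arc_transitive u v z u' v' z' :
  E u v -> E v z -> ~ adj E u z -> E u' v' -> E v' z' -> ~ adj E u' z' ->
  exists g, automorphism E g /\ g u = u' /\ g v = v' /\ g z = z'.
Proof.
  unfold adj. intros Huv Hvz Huz Huv' Hvz' Huz'.
  assert (u <> z) by (intros ->; exact (proj2 dig _ _ Huv Hvz)).
  assert (u' <> z') by (intros ->; exact (proj2 dig _ _ Huv' Hvz')).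
  assert (~ E u z /\ ~ E z u /\ ~ E u' z' /\ ~ E z' u') as [? [? [? ?]]] by tauto.
  destruct (extend_star_iso E CH [v; u; z] [v'; u'; z'] v) as [g [Hg Hgv]].
  - NoDup_by_arcs dig.
  - NoDup_by_arcs dig.
  - reflexivity.
  - intros [|[|[|i]]] [|[|[|j]]] Hi Hj; simpl in *; try lia; arc_iff dig.
  - intros [|[|[|j]]] Hj; simpl in *; [lia | right; exact Huv | left; exact Hvz | lia].
  - exists g. split; auto.
    split; [apply (Hgv 1) | split; [apply (Hgv 0) | apply (Hgv 2)]]; simpl; lia.
Qed.

Lemma out_iso_everywhere {T} (e : T -> T -> Prop) x phi :
  out_iso E e x phi -> forall v, exists psi, out_iso E e v psi.
Proof.
  intros Hphi v. destruct (vertex_transitive x v) as [g [Hg <-]].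
  eexists. apply out_iso_aut; eauto.
Qed.

End Transitivity.

Section LocallyH.
Context {V : Type} (E : V -> V -> Prop).

Definition common_out (u v : V) : V -> Prop := fun y => E u y /\ E v y.
Definition common_in (u v : V) : V -> Prop := fun y => E y u /\ E y v.
Definition cycle_apex (u v : V) : V -> Prop := fun y => E v y /\ E y u.

Lemma common_out_image u phi p :
  out_iso E H_arc u phi -> forall y, common_out u (phi p) y <-> exists a, H_arc p a /\ phi a = y.
Proof.
  intros [Hinj [Hout Harc]] y. unfold common_out. split.
  - intros [Huy Hpy]. apply Hout in Huy. destruct Huy as [a <-].
    exists a. split; auto. apply Harc, Hpy.
  - intros [a [Hpa <-]]. split; [apply Hout; eauto | apply Harc, Hpa].
Qed.

Hypothesis H_local : forall v, exists psi, out_iso E H_arc v psi.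

Lemma out_degree v : card_is (E v) 8.
Proof.
  destruct (H_local v) as [psi [Hinj [Hout _]]].
  apply (card_is_image psi (fun a => In a H_vertices)); [exact Hinj | |].
  - intro y. rewrite Hout. split; intros [a Ha]; exists a; [split |]; try tauto.
    apply H_vertices_complete.
  - apply card_is_list, H_vertices_NoDup.
Qed.

Lemma common_out_card u v : E u v -> card_is (common_out u v) 3.
Proof.
  intro Huv. destruct (H_local u) as [phi Hphi].
  destruct (out_iso_out E H_arc u phi v Hphi Huv) as [p <-].
  apply (card_is_image phi (H_arc p)).
  - apply Hphi.
  - intro y. apply common_out_image, Hphi.
  - apply H_out_card.
Qed.

Lemma common_out_top u v psi :
  E u v -> out_iso E H_arc v psi ->
  exists q, forall y, common_out u v y <-> exists a, H_arc q a /\ psi a = y.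
Proof.
  intros Huv Hpsi. destruct (H_local u) as [phi Hphi].
  destruct (out_iso_out E H_arc u phi v Hphi Huv) as [p <-].
  assert (in_v : forall i, exists c, psi c = phi (H_out p i)).
  { intro i. apply (out_iso_out E H_arc _ psi _ Hpsi), (out_iso_arc E H_arc u phi _ _ Hphi).
    apply H_arc_out. eauto. }
  destruct (in_v z0) as [c0 Hc0], (in_v z1) as [c1 Hc1], (in_v z2) as [c2 Hc2].
  assert (arc_c : forall i j c c', psi c = phi (H_out p i) -> psi c' = phi (H_out p j) ->
                    H_arc (H_out p i) (H_out p j) -> H_arc c c').
  { intros i j c c' Hc Hc' Hij. apply (out_iso_arc E H_arc _ psi _ _ Hpsi).
    rewrite Hc, Hc'. apply (out_iso_arc E H_arc _ phi _ _ Hphi), Hij. }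
  destruct (H_triangle_top c0 c1 c2) as [q Hq];
    try (eapply arc_c; eauto; apply H_arc_out_next).
  exists q. intro y. rewrite common_out_image by exact Hphi. split.
  - intros [a [Hpa <-]]. apply H_arc_out in Hpa. destruct Hpa as [[] ->];
      [exists c0 | exists c1 | exists c2]; split; auto; apply Hq; tauto.
  - intros [a [Hqa <-]]. apply Hq in Hqa.
    destruct Hqa as [-> | [-> | ->]]; eexists; (split; [apply H_arc_out; eauto | eauto]).
Qed.

End LocallyH.

Section Apex.
Context {V : Type} (E : V -> V -> Prop).
Hypothesis dig : is_digraph E.
Hypothesis CH : C_homogeneous E.
Hypothesis H_local : forall v, exists psi, out_iso E H_arc v psi.

Section TopOfCommonOut.
Variables (u v : V) (psi : HV -> V) (q : HV).
Hypothesis Huv : E u v.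
Hypothesis Hpsi : out_iso E H_arc v psi.
Hypothesis Hq : forall y, common_out E u v y <-> exists a, H_arc q a /\ psi a = y.

Let top_arc a : H_arc q a -> E (psi q) (psi a).
Proof. apply (out_iso_arc E H_arc v psi _ _ Hpsi). Qed.

Let common_out_arcs i : E u (psi (H_out q i)) /\ E v (psi (H_out q i)).
Proof. apply Hq. exists (H_out q i). split; auto. apply H_arc_out. eauto. Qed.

Lemma common_out_rotation :
  exists g, automorphism E g /\ g u = u /\ g v = v /\
    forall i, g (psi (H_out q i)) = psi (H_out q (Z3_next i)).
Proof.
  destruct (common_out_arcs z0) as [U0 V0], (common_out_arcs z1) as [U1 V1],
    (common_out_arcs z2) as [U2 V2].
  assert (forall i, E (psi (H_out q i)) (psi (H_out q (Z3_next i)))) as A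
    by (intro i; apply (out_iso_arc E H_arc v psi _ _ Hpsi), H_arc_out_next).
  pose proof (A z0) as A01; pose proof (A z1) as A12; pose proof (A z2) as A20; simpl in *.
  clear A.
  destruct (extend_star_iso E CH
              [u; v; psi (H_out q z0); psi (H_out q z1); psi (H_out q z2)]
              [u; v; psi (H_out q z1); psi (H_out q z2); psi (H_out q z0)] u) as [g [Hg Hgl]].
  - NoDup_by_arcs dig.
  - NoDup_by_arcs dig.
  - reflexivity.
  - intros [|[|[|[|[|i]]]]] [|[|[|[|[|j]]]]] Hi Hj; simpl in *; try lia; arc_iff dig.
  - intros [|[|[|[|[|j]]]]] Hj; simpl in *; try lia; left; assumption.
  - exists g. split; [exact Hg |]. split; [apply (Hgl 0) | split; [apply (Hgl 1) |]]; try (simpl; lia).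
    intros []; [apply (Hgl 2) | apply (Hgl 3) | apply (Hgl 4)]; simpl; lia.
Qed.

Lemma rotation_fixes_top g :
  automorphism E g -> g v = v -> (forall i, g (psi (H_out q i)) = psi (H_out q (Z3_next i))) ->
  g (psi q) = psi q.
Proof.
  intros Hg Hgv Hrot.
  assert (E v (g (psi q))) as Hv.
  { rewrite <- Hgv. apply (aut_arc_map E g _ _ Hg), (out_iso_in E H_arc v psi q Hpsi). }
  destruct (out_iso_out E H_arc v psi _ Hpsi Hv) as [y Hy]. rewrite <- Hy. f_equal.
  apply H_top_unique. intro i.
  assert (Hprev : exists j, i = Z3_next j) by (destruct i; [exists z2 | exists z0 | exists z1]; auto).
  destruct Hprev as [j ->]. apply (out_iso_arc E H_arc v psi _ _ Hpsi).
  rewrite Hy, <- Hrot. apply (aut_arc_map E g _ _ Hg), top_arc, H_arc_out. eauto.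
Qed.

Lemma in_neighbour_of_top_index z i j : E v z -> E z (psi q) ->
  E z (psi (H_out q i)) -> E z (psi (H_out q j)) -> i = j.
Proof.
  intros Hvz Hzq Hi Hj. destruct (out_iso_out E H_arc v psi z Hpsi Hvz) as [y <-].
  rewrite <- !(out_iso_arc E H_arc v psi _ _ Hpsi) in *.
  eapply H_in_neighbour_out_unique; eauto.
Qed.

(* The rotation fixes the top and shifts the unique triangle vertex dominated by an apex that
   dominates the top; so such an apex would have three distinct images among the apexes. *)
Lemma cycle_apex_not_into_top :
  card_is (cycle_apex E u v) 2 -> forall z, cycle_apex E u v z -> ~ E z (psi q).
Proof.
  intros Hcard z Hz Hzq.
  destruct (out_iso_out E H_arc v psi z Hpsi (proj1 Hz)) as [y Hy].
  destruct (H_in_neighbour_out y q) as [i Hi].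
  { apply (out_iso_arc E H_arc v psi _ _ Hpsi). rewrite Hy. exact Hzq. }
  apply (out_iso_arc E H_arc v psi _ _ Hpsi) in Hi. rewrite Hy in Hi.
  destruct common_out_rotation as [g [Hg [Hgu [Hgv Hrot]]]].
  assert (Htop := rotation_fixes_top g Hg Hgv Hrot).
  assert (step : forall w j, cycle_apex E u v w -> E w (psi q) -> E w (psi (H_out q j)) ->
            cycle_apex E u v (g w) /\ E (g w) (psi q) /\ E (g w) (psi (H_out q (Z3_next j)))).
  { intros w j [Hvw Hwu] Hwq Hwj. unfold cycle_apex.
    rewrite <- Hgu, <- Hgv, <- Htop, <- Hrot.
    repeat split; apply (aut_arc_map E g); auto. }
  assert (distinct : forall w w' j k, cycle_apex E u v w -> E w (psi q) ->
            E w (psi (H_out q j)) -> E w' (psi (H_out q k)) -> j <> k -> w <> w').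
  { intros w w' j k [Hvw _] Hwq Hj Hk Hjk <-. apply Hjk.
    eapply in_neighbour_of_top_index; eauto. }
  destruct (step z i) as [A1 [Q1 I1]]; auto.
  destruct (step (g z) (Z3_next i)) as [A2 [Q2 I2]]; auto.
  assert (z <> g z) by (apply (distinct _ _ i (Z3_next i)); auto; destruct i; discriminate).
  assert (z <> g (g z))
    by (apply (distinct _ _ i (Z3_next (Z3_next i))); auto; destruct i; discriminate).
  assert (g z <> g (g z))
    by (apply (distinct _ _ (Z3_next i) (Z3_next (Z3_next i))); auto; destruct i; discriminate).
  assert (3 <= 2); [| lia].
  apply (card_is_le (fun w => In w [z; g z; g (g z)]) (cycle_apex E u v)); auto.
  - intros w [<- | [<- | [<- | []]]]; auto.
  - apply card_is_list. repeat constructor; simpl; intuition congruence.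
Qed.

Lemma cycle_apex_top_or_antipode :
  card_is (cycle_apex E u v) 2 ->
  forall z, cycle_apex E u v z -> z = psi q \/ z = psi (H_antipode q).
Proof.
  intros Hcard z Hz. destruct (out_iso_out E H_arc v psi z Hpsi (proj1 Hz)) as [y <-].
  destruct (H_vertex_cases q y) as [-> | [Hqy | [-> | Hyq]]]; auto; exfalso.
  - apply (proj2 dig _ _ (proj2 Hz)), Hq. eauto.
  - apply (cycle_apex_not_into_top Hcard _ Hz), (out_iso_arc E H_arc v psi _ _ Hpsi), Hyq.
Qed.

End TopOfCommonOut.

Lemma cycle_apex_antipode (two : forall u v, E u v -> card_is (cycle_apex E u v) 2) u v :
  E u v -> exists b, E v b /\ E b u /\ (forall y, common_out E u v y -> E y b) /\
    forall z, cycle_apex E u v z -> z = b \/ forall y, common_out E u v y -> E z y.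
Proof.
  intro Huv. destruct (H_local v) as [psi Hpsi].
  destruct (common_out_top E H_local u v psi Huv Hpsi) as [q Hq].
  assert (Hsplit := cycle_apex_top_or_antipode u v psi q Huv Hpsi Hq (two u v Huv)).
  exists (psi (H_antipode q)). split; [| split; [| split]].
  - apply (out_iso_in E H_arc v psi _ Hpsi).
  - destruct (classic (cycle_apex E u v (psi (H_antipode q)))) as [[_ Hb] | Hb]; [exact Hb |].
    exfalso. assert (2 <= 1); [| lia].
    apply (card_is_le (cycle_apex E u v) (fun y => In y [psi q])); auto.
    + intros z Hz. destruct (Hsplit z Hz) as [-> | ->]; [left; reflexivity | contradiction].
    + apply card_is_list. repeat constructor. simpl; tauto.
  - intros y Hy. apply Hq in Hy. destruct Hy as [a [Hqa <-]].
    apply H_arc_out in Hqa. destruct Hqa as [i ->].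
    apply (out_iso_arc E H_arc v psi _ _ Hpsi), H_out_to_antipode.
  - intros z Hz. destruct (Hsplit z Hz) as [-> | ->]; [right | left; reflexivity].
    intros y Hy. apply Hq in Hy. destruct Hy as [a [Hqa <-]].
    apply (out_iso_arc E H_arc v psi _ _ Hpsi), Hqa.
Qed.
End Apex.

Section Counting.
Context {V : Type} (E : V -> V -> Prop).
Hypothesis dig : is_digraph E.
Hypothesis LF : locally_finite E.
Hypothesis CH : C_homogeneous E.
Hypothesis H_local : forall v, exists psi, out_iso E H_arc v psi.

Lemma card_is_exists_adj (P : V -> Prop) u : (forall y, P y -> adj E u y) -> exists n, card_is P n.
Proof. intro HP. destruct (LF u) as [l Hl]. apply (card_is_exists P l). auto. Qed.

Lemma arc_card_constant (P : V -> V -> V -> Prop) :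
  (forall g u v y, automorphism E g -> (P (g u) (g v) (g y) <-> P u v y)) ->
  (forall u v y, P u v y -> adj E u y) ->
  exists n, forall u v, E u v -> card_is (P u v) n.
Proof.
  intros Hinv Hnear. destruct (classic (exists u0 v0, E u0 v0)) as [[u0 [v0 H0]] | none].
  - destruct (card_is_exists_adj (P u0 v0) u0) as [n Hn]; [intros y; apply Hnear |].
    exists n. intros u v Huv. destruct (arc_transitive E dig CH u0 v0 u v H0 Huv) as [g [Hg [<- <-]]].
    apply (card_is_aut E g (P u0 v0)); auto.
  - exists 0. intros u v Huv. exfalso. eauto.
Qed.

Lemma induced_two_arc_card_constant (P : V -> V -> V -> V -> Prop) :
  (forall g u v z y, automorphism E g -> (P (g u) (g v) (g z) (g y) <-> P u v z y)) ->
  (forall u v z y, P u v z y -> adj E u y) ->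
  exists n, forall u v z, E u v -> E v z -> ~ adj E u z -> card_is (P u v z) n.
Proof.
  intros Hinv Hnear.
  destruct (classic (exists u0 v0 z0, E u0 v0 /\ E v0 z0 /\ ~ adj E u0 z0))
    as [[u0 [v0 [z0 [H1 [H2 H3]]]]] | none].
  - destruct (card_is_exists_adj (P u0 v0 z0) u0) as [n Hn]; [intros y; apply Hnear |].
    exists n. intros u v z Huv Hvz Huz.
    destruct (induced_two_arc_transitive E dig CH u0 v0 z0 u v z H1 H2 H3 Huv Hvz Huz)
      as [g [Hg [<- [<- <-]]]].
    apply (card_is_aut E g (P u0 v0 z0)); auto.
  - exists 0. intros u v z Huv Hvz Huz. exfalso. eauto 7.
Qed.

Lemma in_degree d :
  (forall u v, E u v -> card_is (cycle_apex E u v) d) -> 0 < d -> forall x, card_is (fun y => E y x) 8.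
Proof.
  intros Hd d_pos x. destruct (card_is_exists_adj (fun y => E y x) x) as [m Hm]; [unfold adj; tauto |].
  enough (m = 8) as -> by exact Hm.
  assert (m * d = 8 * d); [| nia].
  apply (double_counting (fun u => E u x) (E x) (fun u z => E z u) m 8 d d Hm).
  - apply out_degree; auto.
  - intros u Hu. apply (card_is_ext (cycle_apex E u x)); [unfold cycle_apex; tauto | auto].
  - intros z Hz. apply (card_is_ext (cycle_apex E x z)); [unfold cycle_apex; tauto | auto].
Qed.

Lemma common_in_card k d (x : V) :
  (forall u v, E u v -> card_is (common_in E u v) k) ->
  (forall u v, E u v -> card_is (cycle_apex E u v) d) -> 0 < d -> k = 3.
Proof.
  intros Hk Hd d_pos.
  assert (8 * 3 = 8 * k); [| lia].
  apply (double_counting (fun u => E u x) (E x) (fun u z => E u z) 8 8 3 k).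
  - apply (in_degree d); auto.
  - apply out_degree; auto.
  - intros u Hu. apply (card_is_ext (common_out E u x)); [unfold common_out; tauto |].
    apply common_out_card; auto.
  - intros z Hz. apply (card_is_ext (common_in E x z)); [unfold common_in; tauto | auto].
Qed.

Lemma non_adjacent_out_card d :
  (forall u v, E u v -> card_is (cycle_apex E u v) d) ->
  forall u x, E u x -> card_is (fun z => E x z /\ ~ adj E u z) (8 - 3 - d).
Proof.
  intros Hd u x Hux.
  assert (H1 : card_is (fun z => E x z /\ ~ E u z) (8 - 3)).
  { apply card_is_diff; [apply out_degree; auto |].
    apply (card_is_ext (common_out E u x)); [unfold common_out; tauto |].
    apply common_out_card; auto. }
  apply (card_is_ext (fun z => (E x z /\ ~ E u z) /\ ~ E z u)); [unfold adj; tauto |].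
  apply card_is_diff; auto.
  apply (card_is_ext (cycle_apex E u x)); [| auto].
  intro z. unfold cycle_apex. pose proof (proj2 dig z u). tauto.
Qed.

Lemma in_neighbour_induced_two_arcs s x : E s x ->
  card_is (fun uz => (E (fst uz) x /\ E x (snd uz) /\ ~ adj E (fst uz) (snd uz)) /\
                     (E s (fst uz) /\ E s (snd uz))) 3.
Proof.
  intro Hsx. destruct (H_local s) as [psi Hpsi].
  destruct (out_iso_out E H_arc s psi x Hpsi Hsx) as [p <-].
  apply (card_is_image (fun ac => (psi (fst ac), psi (snd ac))) (H_induced_two_arc p));
    [| | apply H_induced_two_arc_card].
  - intros [a c] [a' c'] Heq. injection Heq as Ha Hc.
    apply (out_iso_inj E H_arc s psi) in Ha, Hc; auto. subst. reflexivity.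
  - intros [u z]. unfold H_induced_two_arc, adj. simpl. split.
    + intros [[Hux [Hxz Huz]] [Hsu Hsz]].
      destruct (out_iso_out E H_arc s psi u Hpsi Hsu) as [a <-].
      destruct (out_iso_out E H_arc s psi z Hpsi Hsz) as [c <-].
      exists (a, c). simpl. split; [| reflexivity].
      rewrite !(out_iso_arc E H_arc s psi _ _ Hpsi). tauto.
    + intros [[a c] [Hac Heq]]. injection Heq as <- <-. simpl in Hac.
      rewrite !(out_iso_arc E H_arc s psi _ _ Hpsi) in Hac.
      pose proof (out_iso_in E H_arc s psi a Hpsi). pose proof (out_iso_in E H_arc s psi c Hpsi).
      tauto.
Qed.

Lemma induced_two_arc_common_in_bounds r (x : V) :
  (forall u v, E u v -> card_is (common_in E u v) 3) ->
  (forall u v z, E u v -> E v z -> ~ adj E u z -> card_is (fun s => E s u /\ E s v /\ E s z) r) ->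
  0 < r < 3.
Proof.
  intros Hk Hr. destruct (H_local x) as [phi Hphi].
  assert (arc : forall a b, H_arc a b -> E (phi a) (phi b))
    by (intros a b; apply (out_iso_arc E H_arc x phi _ _ Hphi)).
  assert (narc : forall a b, ~ H_arc a b -> ~ E (phi a) (phi b))
    by (intros a b; rewrite (out_iso_arc E H_arc x phi _ _ Hphi); auto).
  assert (Hnadj : ~ adj E (phi Htop) (phi Hbot)) by (intros [H | H]; revert H; apply narc; auto).
  pose proof (Hr _ _ _ (arc Htop (Hpt false z0) I) (arc (Hpt false z0) Hbot I) Hnadj) as Hr0.
  set (P0 := fun s => E s (phi Htop) /\ E s (phi (Hpt false z0)) /\ E s (phi Hbot)) in Hr0.
  split.
  - apply (card_is_pos P0 r x); [| exact Hr0].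
    repeat split; apply (out_iso_in E H_arc x phi _ Hphi).
  - apply (card_is_lt P0 (common_in E (phi Htop) (phi (Hpt false z0))) r 3 (phi (Hpt true z1)));
      [| | | exact Hr0 | apply Hk, arc; exact I].
    + intros y [H1 [H2 _]]. split; auto.
    + split; apply arc; exact I.
    + intros [_ [_ H]]. revert H. apply narc. simpl. tauto.
Qed.

Lemma induced_two_arc_double_count d r (x : V) :
  (forall u v, E u v -> card_is (cycle_apex E u v) d) -> 0 < d ->
  (forall u v z, E u v -> E v z -> ~ adj E u z -> card_is (fun s => E s u /\ E s v /\ E s z) r) ->
  8 * 3 = (8 * (8 - 3 - d)) * r.
Proof.
  intros Hd d_pos Hr.
  apply (double_counting (fun s => E s x)
           (fun uz => E (fst uz) x /\ (E x (snd uz) /\ ~ adj E (fst uz) (snd uz)))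
           (fun s uz => E s (fst uz) /\ E s (snd uz))).
  - apply (in_degree d); auto.
  - apply (card_is_pairs (fun a => E a x) (fun a z => E x z /\ ~ adj E a z));
      [apply (in_degree d); auto |].
    intros a Ha. apply (non_adjacent_out_card d); auto.
  - intros s Hs. exact (in_neighbour_induced_two_arcs s x Hs).
  - intros [a c] [Hax [Hxc Hac]]. simpl.
    apply (card_is_ext (fun s => E s a /\ E s x /\ E s c)); [tauto | apply Hr; assumption].
Qed.

Lemma cycle_apex_card u v : E u v -> card_is (cycle_apex E u v) 2.
Proof.
  intro Huv.
  destruct (arc_card_constant (cycle_apex E)) as [d Hd].
  { intros g a b y Hg. unfold cycle_apex. rewrite <- !(aut_arc E g _ _ Hg). tauto. }
  { intros a b y [_ Hya]. right. exact Hya. }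
  destruct (arc_card_constant (common_in E)) as [k Hk].
  { intros g a b y Hg. unfold common_in. rewrite <- !(aut_arc E g _ _ Hg). tauto. }
  { intros a b y [Hya _]. right. exact Hya. }
  destruct (induced_two_arc_card_constant (fun a b c s => E s a /\ E s b /\ E s c)) as [r Hr].
  { intros g a b c y Hg. rewrite <- !(aut_arc E g _ _ Hg). tauto. }
  { intros a b c s [Hsa _]. right. exact Hsa. }
  destruct (H_local u) as [phi Hphi].
  assert (arc : forall a b, H_arc a b -> E (phi a) (phi b))
    by (intros a b; apply (out_iso_arc E H_arc u phi _ _ Hphi)).
  assert (d_pos : 0 < d).
  { apply (card_is_pos (cycle_apex E (phi Htop) (phi (Hpt false z0))) d (phi (Hpt true z2))).
    - split; apply arc; exact I.
    - apply Hd, arc. exact I. }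
  assert (k = 3) as -> by (apply (common_in_card k d u); auto).
  pose proof (induced_two_arc_common_in_bounds r u Hk Hr) as r_bounds.
  pose proof (induced_two_arc_double_count d r u Hd d_pos Hr) as count.
  assert (d = 2) as <- by (assert (r = 1 \/ r = 2) as [-> | ->] by lia; lia).
  apply Hd, Huv.
Qed.

End Counting.

Section OutNeighbourhoodH.
Context {V : Type} (E : V -> V -> Prop).
Hypothesis dig : is_digraph E.
Hypothesis LF : locally_finite E.
Hypothesis CH : C_homogeneous E.
Variables (x : V) (phi : HV -> V).
Hypothesis Hphi : out_iso E H_arc x phi.

Let H_local := out_iso_everywhere E dig CH H_arc x phi Hphi.

Lemma out_neighbour_within_out_nbhd b : E b x -> exists c, E b c /\ E x c.
Proof.
  intro Hbx. destruct (H_local b) as [psi Hpsi].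
  destruct (out_iso_out E H_arc b psi x Hpsi Hbx) as [p <-].
  exists (psi (H_out p z0)). split; [apply (out_iso_in E H_arc b psi _ Hpsi) |].
  apply (out_iso_arc E H_arc b psi _ _ Hpsi), H_arc_out. eauto.
Qed.

(* Take for b the non-top apex of x -> phi Htop. It is also an apex of each arc
   x -> phi (Hpt false s), and not the top one, since phi (Hpt false (s+1)) -> b; so the whole
   triangle N+(x) ∩ N+(phi (Hpt false s)) points to b. These triangles and phi Htop cover N+(x). *)
Lemma out_nbhd_dominates_in_neighbour : exists b, E b x /\ forall y, E x y -> E y b.
Proof.
  assert (apex := cycle_apex_antipode E dig CH H_local (cycle_apex_card E dig LF CH H_local)).
  assert (common : forall p a, H_arc p a -> common_out E x (phi p) (phi a))
    by (intros p a Hpa; apply (common_out_image E x phi p Hphi); eauto).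
  destruct (apex x (phi Htop)) as [b [Htb [Hbx [Hb _]]]]; [apply (out_iso_in E H_arc x phi _ Hphi) |].
  assert (false_to_b : forall s, E (phi (Hpt false s)) b) by (intro s; apply Hb, common; exact I).
  assert (false_out_to_b : forall s a, H_arc (Hpt false s) a -> E (phi a) b).
  { intros s a Ha.
    destruct (apex x (phi (Hpt false s))) as [b' [_ [_ [Hb' Hsplit]]]];
      [apply (out_iso_in E H_arc x phi _ Hphi) |].
    destruct (Hsplit b) as [-> | Hdom]; [split; auto | apply Hb', common, Ha |].
    exfalso. apply (proj2 dig _ _ (false_to_b (Z3_next s))), Hdom, common. destruct s; exact I. }
  exists b. split; [exact Hbx |]. intros y Hxy.
  destruct (out_iso_out E H_arc x phi y Hphi Hxy) as [a <-].
  destruct (H_covered_by_false_out a) as [-> | [s Hs]]; eauto.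
Qed.

End OutNeighbourhoodH.

Theorem no_H_out_nbhd {V} (E : V -> V -> Prop) :
  is_digraph E -> locally_finite E -> C_homogeneous E ->
  forall x, ~ induced_isomorphic E (out_nbhd E x) H_arc.
Proof.
  intros dig LF CH x [phi Hphi]. change (out_iso E H_arc x phi) in Hphi.
  destruct (out_nbhd_dominates_in_neighbour E dig LF CH x phi Hphi) as [b [Hbx Hdom]].
  destruct (out_neighbour_within_out_nbhd E dig CH x phi Hphi b Hbx) as [c [Hbc Hxc]].
  exact (proj2 dig _ _ Hbc (Hdom c Hxc)).
Qed.

Section Converse.
Context {V : Type} (E : V -> V -> Prop).
Let Et := transp V E.

Lemma adj_transp a b : adj Et a b <-> adj E a b.
Proof. unfold adj, Et, transp. tauto. Qed.

Lemma is_digraph_transp : is_digraph E -> is_digraph Et.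
Proof. intros [irr asym]. split; unfold Et, transp; auto. Qed.

Lemma locally_finite_transp : locally_finite E -> locally_finite Et.
Proof. intros LF x. destruct (LF x) as [l Hl]. exists l. intros y Hy. apply Hl, adj_transp, Hy. Qed.

Lemma connected_on_transp A : connected_on Et A -> connected_on E A.
Proof.
  intros HA a b Ha Hb. generalize (HA a b Ha Hb). clear Ha Hb.
  induction 1 as [a b [Ha [Hb Hab]] | | ].
  - apply rt_step. rewrite <- adj_transp. repeat split; assumption.
  - apply rt_refl.
  - eapply rt_trans; eauto.
Qed.

Lemma C_homogeneous_transp : C_homogeneous E -> C_homogeneous Et.
Proof.
  intros CH A B f HA cA HB cB [Hmap [Hinj [Hsurj Harc]]].
  destruct (CH A B f HA (connected_on_transp A cA) HB (connected_on_transp B cB)) as [g [[Hinv Hg] Hgf]].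
  - repeat split; auto; intro Hxy; apply (Harc y x); auto.
  - exists g. split; [split; [exact Hinv | intros a b; apply Hg] | exact Hgf].
Qed.

Lemma in_nbhd_transp x :
  induced_isomorphic E (in_nbhd E x) H_arc -> induced_isomorphic Et (out_nbhd Et x) H_arc.
Proof.
  intros [phi [Hinj [Hin Harc]]]. exists (fun a => phi (H_rev a)). split; [| split].
  - intros a b Hab. rewrite <- (H_rev_involutive a), <- (H_rev_involutive b). f_equal. auto.
  - intro v. unfold out_nbhd, Et, transp. rewrite (Hin v). split; intros [a Ha].
    + exists (H_rev a). rewrite H_rev_involutive. exact Ha.
    + eauto.
  - intros a b. unfold Et, transp. rewrite <- Harc. apply H_arc_rev.
Qed.

End Converse.

Theorem lemma3p1 (V : Type) (E : V -> V -> Prop) :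
  is_digraph E -> connected E -> locally_finite E -> C_homogeneous E ->
  forall x : V,
    ~ induced_isomorphic E (out_nbhd E x) H_arc /\
    ~ induced_isomorphic E (in_nbhd E x) H_arc.
Proof.
  intros dig _ LF CH x. split.
  - apply no_H_out_nbhd; auto.
  - intro Hin. apply (no_H_out_nbhd (transp V E) (is_digraph_transp E dig)
                        (locally_finite_transp E LF) (C_homogeneous_transp E CH) x).
    apply in_nbhd_transp, Hin.
Qed.
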